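(* For $k,d\in\mathbb{Z}_{\ge0}$ let $L^o_{k,d}$ (resp. $L^e_{k,d}$) be the set of pairs of tuples $(\mathbf{k},\mathbf{l})=((k_1,\dots,k_n),(l_1,\dots,l_n))$, $0\le n\le k$, with $k_u\ge1$, $l_u\ge0$, $k_u-1-l_u\ge0$, $k_1+\dots+k_n=k$, such that $s:=\sum_{u=1}^n(k_u-1-l_u)$ satisfies $s\le d$ and $s$ is odd (resp. even); the empty pair ($n=0$, $s=0$) counts as even. Then $|L^o_{0,d}|=|L^o_{1,d}|=0$, $|L^e_{0,d}|=|L^e_{1,d}|=1$; $|L^o_{2,0}|=0$, $|L^o_{2,d}|=1$ for $d\ge1$, $|L^e_{2,d}|=2$; $|L^o_{k,0}|=0$, $|L^e_{0,0}|=1$, $|L^e_{k,0}|=2^{k-1}$ for $k\ge1$; and for $k\ge3$, $d\ge1$, \[|L^o_{k,d}|=2|L^o_{k-1,d}|+|L^e_{k-1,d-1}|-|L^e_{k-2,d-1}|,\qquad |L^e_{k,d}|=2|L^e_{k-1,d}|+|L^o_{k-1,d-1}|-|L^o_{k-2,d-1}|.\] In particular $|L^o_{0,0}|=0$, $|L^e_{0,0}|=1$, and for $k\ge1$, $|L^o_{k,k}|=(F_{2k}-F_k)/2$ and $|L^e_{k,k}|=(F_{2k}+F_k)/2$.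
   Context: $F_j$ denotes the $j$-th Fibonacci number ($F_1=F_2=1$, $F_{j}=F_{j-1}+F_{j-2}$). In the paper each pair $(\mathbf{k},\mathbf{l})$ represents the iterated log-sine integral $\mathrm{Ls}_{\mathbf{k}}^{\mathbf{l}}(\sigma)=(-1)^n\int_0^{\sigma}\int_0^{\theta_n}\cdots\int_0^{\theta_2}\prod_{u}\theta_u^{l_u}(\log|2\sin(\theta_u/2)|)^{k_u-1-l_u}\,d\theta_1\cdots d\theta_n$ at a fixed real $\sigma$. *)

From mathcomp Require Import all_boot all_order all_algebra.
Set Implicit Arguments. Unset Strict Implicit. Unset Printing Implicit Defensive.

Fixpoint fib (n : nat) : nat :=
  match n with
  | 0 => 0
  | 1 => 1
  | (m.+1 as p).+1 => fib p + fib m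
  end.

(* A pair of tuples (k, l) = ((k_1..k_n),(l_1..l_n)) is encoded as the list
   [:: (k_1,l_1); ...; (k_n,l_n)]. *)
Definition weight (x : seq (nat * nat)) : nat :=
  sumn [seq (p.1 - 1 - p.2)%N | p <- x].

Definition admissible (k : nat) (x : seq (nat * nat)) : bool :=
  all (fun p => (1 <= p.1) && (p.2 <= p.1 - 1)) x && (sumn (map fst x) == k).

Definition inL (par : bool) (k d : nat) (x : seq (nat * nat)) : bool :=
  [&& admissible k x, weight x <= d & odd (weight x) == par].

Fixpoint seqs_of_len {T : Type} (n : nat) (xs : seq T) : seq (seq T) :=
  match n with
  | 0 => [:: [::]]
  | n'.+1 => [seq y :: t | y <- xs, t <- seqs_of_len n' xs]
  end.

(* Candidate superset: all lists of length <= k with entries in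
   {0..k} x {0..k}; every admissible x has n <= k and k_u, l_u <= k.
   This list is duplicate-free. *)
Definition cands (k : nat) : seq (seq (nat * nat)) :=
  flatten [seq seqs_of_len n [seq (a, b) | a <- iota 0 k.+1, b <- iota 0 k.+1]
          | n <- iota 0 k.+1].

Definition cardL (par : bool) (k d : nat) : nat := count (inL par k d) (cands k).

Definition Lo (k d : nat) : nat := cardL true k d.
Definition Le (k d : nat) : nat := cardL false k d.

(** Cutting off the first part (k_1, l_1), whose weight is w = k_1 - 1 - l_1 < k_1, shows
    that the number N(k, s) of admissible lists of total k and weight s satisfies
    N(k, s) = sum_(a = 1..k) sum_(w < a) N(k - a, s - w), i.e. its generating function is
    (1 - x)(1 - xy) / (1 - 2x - xy + x^2 y).  The denominator gives
    N(k, s) = 2 N(k-1, s) + N(k-1, s-1) - N(k-2, s-1) for k >= 3, and summing over the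
    weights s <= d of one parity gives the recurrences for L^o and L^e.  As the weight of
    an admissible list of total k > 0 is below k, |L_{k,d}| does not depend on d >= k - 1;
    on the diagonal the recurrences then say that |L^o_{k,k}| + |L^e_{k,k}| follows the
    recurrence of F_{2k} and |L^e_{k,k}| - |L^o_{k,k}| that of F_k. *)

From mathcomp Require Import all_boot all_order all_algebra.
From mathcomp Require Import zify.
Import GRing.Theory.

Set Implicit Arguments.
Unset Strict Implicit.
Unset Printing Implicit Defensive.

Lemma eq_count_uniq (T : eqType) (P : pred T) (s t : seq T) :
  uniq s -> uniq t -> {subset P <= s} -> {subset P <= t} -> count P s = count P t.
Proof.
move=> uniq_s uniq_t sub_s sub_t; rewrite -!size_filter; apply/perm_size/uniq_perm.
- exact: filter_uniq.
- exact: filter_uniq.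
by move=> x; rewrite !mem_filter; case Px: (P x) => //=; rewrite sub_s ?sub_t.
Qed.

Lemma sum_nat_eq (Q : pred nat) d y :
  \sum_(0 <= s < d.+1 | Q s) (y == s) = (y <= d) && Q y.
Proof.
elim: d => [|d IH]; first by rewrite big_mkcond big_nat1; case: y => [|y] //=; case: (Q 0).
rewrite big_mkcond big_nat_recr //= -big_mkcond IH.
have [->|ne_yd] := eqVneq y d.+1; first by rewrite ltnn leqnn; case: (Q d.+1).
by rewrite [y <= d.+1]leq_eqVlt (negbTE ne_yd) ltnS; case: (Q d.+1); rewrite addn0.
Qed.

Lemma mem_seqs_of_len (T : eqType) n (xs : seq T) x :
  (x \in seqs_of_len n xs) = (size x == n) && all (mem xs) x.
Proof.
elim: n x => [|n IH] x /=; first by rewrite inE -size_eq0; case: x.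
apply/allpairsPdep/idP => [[y [t [y_in + ->]]]|].
  by rewrite IH /= eqSS => /andP[-> ->]; rewrite y_in.
case: x => [|y t] //= /andP[size_t /andP[y_in all_t]].
by exists y, t; rewrite IH -eqSS size_t.
Qed.

Lemma uniq_seqs_of_len (T : eqType) n (xs : seq T) :
  uniq xs -> uniq (seqs_of_len n xs).
Proof.
move=> uniq_xs; elim: n => [|n IH] //=.
by apply: allpairs_uniq => // -[y t] [y' t'] _ _ [-> ->].
Qed.

Lemma admissible_nil k : admissible k [::] = (k == 0).
Proof. by rewrite /admissible eq_sym. Qed.

Lemma admissible_cons k a b t :
  admissible k ((a, b) :: t) = [&& 0 < a, b <= a - 1, a <= k & admissible (k - a) t].
Proof.
rewrite /admissible /=; case: (0 < a) (b <= a - 1) (all _ t) => [] [] [] //=;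
  last by rewrite andbF.
by apply/eqP/andP => [E|[le_ak /eqP E]]; [split; [|apply/eqP] | ]; lia.
Qed.

Lemma weight_cons a b t : weight ((a, b) :: t) = a - 1 - b + weight t.
Proof. by []. Qed.

Lemma admissible_weight_size k x : admissible k x -> weight x + size x <= k.
Proof.
elim: x k => [|[a b] t IH] k; first by rewrite admissible_nil => /eqP ->.
by rewrite admissible_cons weight_cons /= => /and4P[a_gt0 _ le_ak /IH]; lia.
Qed.

Lemma admissible_weight_lt k x : 0 < k -> admissible k x -> weight x < k.
Proof.
case: x => [|p t] k_gt0; first by rewrite admissible_nil eqn0Ngt k_gt0.
by move/admissible_weight_size => /=; lia.
Qed.

Lemma admissible_parts_le k x :
  admissible k x -> all (fun p => (p.1 <= k) && (p.2 <= k)) x.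
Proof.
elim: x k => [|[a b] t IH] k //; rewrite admissible_cons => /and4P[_ le_ba le_ak /IH].
move=> /allP le_t /=; apply/andP; split; first lia.
by apply/allP => p /le_t; lia.
Qed.

Lemma uniq_cands k : uniq (cands k).
Proof.
pose pairs := [seq (a, b) | a <- iota 0 k.+1, b <- iota 0 k.+1].
have -> : cands k = [seq t | n <- iota 0 k.+1, t <- seqs_of_len n pairs].
  by rewrite /cands; congr flatten; apply: eq_map => n; rewrite map_id.
apply: allpairs_uniq_dep => [|n _|]; rewrite ?iota_uniq //.
  apply/uniq_seqs_of_len/allpairs_uniq; rewrite ?iota_uniq //.
  by move=> [a b] [a' b'] _ _ [-> ->].
move=> _ _ /allpairsPdep[n [t [_ + ->]]] /allpairsPdep[n' [t' [_ + ->]]] /= eq_tt'.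
by rewrite !mem_seqs_of_len -eq_tt' => /andP[/eqP <- _] /andP[/eqP <- _].
Qed.

Lemma admissible_in_cands k x : admissible k x -> x \in cands k.
Proof.
move=> adm_x; have /admissible_weight_size le_size := adm_x.
apply/flatten_mapP; exists (size x); first by rewrite mem_iota; lia.
rewrite mem_seqs_of_len eqxx; apply/allP => -[a b] /(allP (admissible_parts_le adm_x)).
move=> /andP[le_ak le_bk]; apply/allpairsP; exists (a, b).
by rewrite !mem_iota /= !ltnS le_ak le_bk.
Qed.

(* The first part (k_1, l_1) of a list of total k is encoded by the total j = k - k_1
   left for the tail and by its weight w = k_1 - 1 - l_1. *)
Definition heads (k : nat) : seq (nat * nat) :=
  [seq (j, w) | j <- iota 0 k, w <- iota 0 (k - j)].

Definition head_part (k : nat) (jw : nat * nat) : nat * nat :=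
  (k - jw.1, k - jw.1 - 1 - jw.2).

Fixpoint comps_fuel (f k : nat) : seq (seq (nat * nat)) :=
  if k is 0 then [:: [::]] else
  if f is f'.+1 then [seq head_part k jw :: t | jw <- heads k, t <- comps_fuel f' jw.1]
  else [::].

Definition comps (k : nat) : seq (seq (nat * nat)) := comps_fuel k k.

Lemma mem_heads k jw : (jw \in heads k) = (jw.1 < k) && (jw.2 < k - jw.1).
Proof.
case: jw => j w; apply/allpairsPdep/andP => [[j' [w' []]]|[lt_jk lt_w]].
  by rewrite !mem_iota => lt_j' lt_w' [-> ->].
by exists j, w; rewrite !mem_iota.
Qed.

Lemma uniq_heads k : uniq (heads k).
Proof.
apply: allpairs_uniq_dep => [|j _|]; rewrite ?iota_uniq //.
by move=> [j w] [j' w'] _ _ [-> ->].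
Qed.

Lemma comps_fuelS f k :
  comps_fuel f.+1 k.+1 =
  [seq head_part k.+1 jw :: t | jw <- heads k.+1, t <- comps_fuel f jw.1].
Proof. by []. Qed.

Lemma comps_fuel_eq f g k : k <= f -> k <= g -> comps_fuel f k = comps_fuel g k.
Proof.
elim: f g k => [|f IH] [|g] [|k] // le_kf le_kg.
rewrite !comps_fuelS; congr flatten.
apply/eq_in_map => -[j w]; rewrite mem_heads /= => /andP[lt_jk _].
by rewrite (IH g) //; lia.
Qed.

Lemma compsS k :
  comps k.+1 = [seq head_part k.+1 jw :: t | jw <- heads k.+1, t <- comps jw.1].
Proof.
rewrite /comps comps_fuelS; congr flatten; apply/eq_in_map => -[j w].
rewrite mem_heads /= => /andP[lt_jk _]; rewrite (@comps_fuel_eq k j j) //; lia.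
Qed.

Lemma mem_comps k x : (x \in comps k) = admissible k x.
Proof.
elim/ltn_ind: k x => -[|k] IH x.
  by case: x => [|[[|a] b] t]; rewrite inE ?admissible_cons ?andbF.
rewrite compsS; apply/allpairsPdep/idP => [[[j w] [t [jw_in t_in ->]]]|].
  move: jw_in t_in; rewrite mem_heads /= => /andP[lt_jk lt_w]; rewrite IH // => adm_t.
  rewrite /head_part /= admissible_cons (_ : k.+1 - (k.+1 - j) = j) ?adm_t ?andbT; last lia.
  by apply/and3P; split; lia.
case: x => [|[a b] t]; rewrite ?admissible_nil // admissible_cons.
move=> /and4P[a_gt0 le_ba le_ak adm_t]; exists (k.+1 - a, a - 1 - b), t; split.
- by rewrite mem_heads /=; lia.
- by rewrite IH //=; lia.
- by rewrite /head_part /=; congr ((_, _) :: _); lia.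
Qed.

Lemma uniq_comps k : uniq (comps k).
Proof.
elim/ltn_ind: k => -[|k] IH //; rewrite compsS.
apply: allpairs_uniq_dep => [|[j w]|]; first exact: uniq_heads.
  by rewrite mem_heads => /andP[lt_jk _]; apply: IH.
move=> [[j w] t] [[j' w'] t'].
move=> /allpairsPdep[jw1 [t1 [jw1_in _ E1]]] /allpairsPdep[jw2 [t2 [jw2_in _ E2]]].
move: (congr1 tag E1) (congr1 tag E2) => /= eq_jw1 eq_jw2; subst jw1 jw2.
move: jw1_in jw2_in; rewrite !mem_heads /head_part /=.
move=> /andP[lt_jk lt_w] /andP[lt_j'k lt_w'] [eq_j eq_w ->].
have eq_jj' : j = j' by lia.
by subst j'; have -> : w = w' by lia.
Qed.

Lemma cardL_comps par k d :
  cardL par k d = count (fun x => (weight x <= d) && (odd (weight x) == par)) (comps k).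
Proof.
rewrite /cardL (@eq_count_uniq _ _ _ (comps k) (uniq_cands k) (uniq_comps k)).
- by apply: eq_in_count => x; rewrite mem_comps /inL => ->.
- by move=> x /and3P[/admissible_in_cands].
- by move=> x /and3P[]; rewrite mem_comps.
Qed.

Definition ncomp (k s : nat) : nat := count (fun x => weight x == s) (comps k).

Lemma cardL_ncomp par k d :
  cardL par k d = \sum_(0 <= s < d.+1 | odd s == par) ncomp k s.
Proof.
rewrite cardL_comps /ncomp; elim: (comps k) => [|x l IH] /=; first by rewrite big1.
by rewrite big_split /= -IH sum_nat_eq.
Qed.

(* The number of admissible lists of total j and weight s - w, written without a
   truncated subtraction: it vanishes when w > s. *)
Definition nshift (j w s : nat) : nat := count (fun t => w + weight t == s) (comps j).

Lemma ncompS k s :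
  ncomp k.+1 s = \sum_(0 <= j < k.+1) \sum_(0 <= w < k.+1 - j) nshift j w s.
Proof.
rewrite /ncomp compsS count_flatten sumnE !big_map /heads big_allpairs_dep.
rewrite /index_iota subn0; apply: eq_big_seq => j; rewrite mem_iota => /andP[_ lt_jk].
rewrite subn0; apply: eq_big_seq => w; rewrite mem_iota => /andP[_ lt_w].
rewrite count_map; apply: eq_count => t.
by rewrite /head_part /= weight_cons; congr (_ + _ == _); lia.
Qed.

(* The anti-diagonal of the double sum in ncompS, by which it grows from k to k.+1. *)
Definition ndiag (k s : nat) : nat := \sum_(0 <= j < k.+1) nshift j (k - j) s.

Lemma ncompSS k s : ncomp k.+2 s = ncomp k.+1 s + ndiag k.+1 s.
Proof.
rewrite !ncompS /ndiag big_nat_recr //= subSnn big_nat1.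
rewrite [X in _ = _ + X]big_nat_recr //= subnn.
have -> : \sum_(0 <= j < k.+1) \sum_(0 <= w < k.+2 - j) nshift j w s =
          \sum_(0 <= j < k.+1) (\sum_(0 <= w < k.+1 - j) nshift j w s + nshift j (k.+1 - j) s).
  by apply: eq_big_nat => j /andP[_ lt_jk]; rewrite subSn ?big_nat_recr //; lia.
by rewrite big_split /= addnA.
Qed.

Lemma ndiagS k s : ndiag k.+1 s.+1 = ndiag k s + ncomp k.+1 s.+1.
Proof.
rewrite /ndiag big_nat_recr //= subnn; congr (_ + _).
apply: eq_big_nat => j /andP[_ lt_jk]; rewrite subSn /nshift; last by [].
by under eq_count do rewrite addSn eqSS.
Qed.

Lemma ndiag0 k : ndiag k 0 = ncomp k 0.
Proof.
rewrite /ndiag big_nat_recr //= subnn big1_seq // => j /andP[_].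
rewrite mem_index_iota => /andP[_ lt_jk]; rewrite /nshift (eq_count (a2 := pred0)) ?count_pred0 //.
by move=> t; rewrite addn_eq0 subn_eq0 leqNgt lt_jk.
Qed.

Lemma ncomp1 s : ncomp 1 s = (s == 0).
Proof. by case: s. Qed.

Lemma ncomp_rec m s :
  ncomp m.+3 s.+1 + ncomp m.+1 s = 2 * ncomp m.+2 s.+1 + ncomp m.+2 s.
Proof. by have := ncompSS m.+1 s.+1; have := ncompSS m s; rewrite ndiagS; lia. Qed.

Lemma ncomp_rec0 m : ncomp m.+2 0 = 2 * ncomp m.+1 0.
Proof. by rewrite ncompSS ndiag0 mul2n addnn. Qed.

Lemma ncomp_weight0 k : ncomp k.+1 0 = 2 ^ k.
Proof. by elim: k => [|k IH]; rewrite ?ncomp1 // ncomp_rec0 IH expnS. Qed.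

Lemma ncomp_eq0 k s : 0 < k -> k <= s -> ncomp k s = 0.
Proof.
move=> k_gt0 le_ks; apply/eqP; rewrite -leqn0 leqNgt -has_count; apply/hasPn => x.
rewrite mem_comps => /(admissible_weight_lt k_gt0) lt_xk.
by apply: contraTN lt_xk => /eqP ->; rewrite -leqNgt.
Qed.

Lemma cardL_saturate par k d d' :
  0 < k -> k.-1 <= d -> k.-1 <= d' -> cardL par k d = cardL par k d'.
Proof.
move=> k_gt0; suff trunc e : k.-1 <= e ->
    cardL par k e = \sum_(0 <= s < k | odd s == par) ncomp k s.
  by move=> le_d le_d'; rewrite !trunc.
move=> le_e; rewrite cardL_ncomp (@big_cat_nat _ _ _ k) //=; last lia.
rewrite [X in _ + X]big1_seq ?addn0 // => s /andP[_].
by rewrite mem_index_iota => /andP[le_ks _]; apply: ncomp_eq0.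
Qed.

Lemma cardL_recl par k e :
  cardL par k e.+1 =
  ~~ par * ncomp k 0 + \sum_(0 <= s < e.+1 | odd s == ~~ par) ncomp k s.+1.
Proof.
rewrite cardL_ncomp big_mkcond big_nat_recl // [X in _ + X = _]big_mkcond.
rewrite [in RHS]big_mkcond /=; congr (_ + _); first by case: par; rewrite ?mul1n ?mul0n.
by apply: eq_bigr => s _; case: (odd s); case: par.
Qed.

Lemma cardL_rec par m e :
  cardL par m.+3 e.+1 + cardL (~~ par) m.+1 e =
  2 * cardL par m.+2 e.+1 + cardL (~~ par) m.+2 e.
Proof.
rewrite !cardL_recl !cardL_ncomp ncomp_rec0.
have sums :
    \sum_(0 <= s < e.+1 | odd s == ~~ par) ncomp m.+3 s.+1 +
    \sum_(0 <= s < e.+1 | odd s == ~~ par) ncomp m.+1 s =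
    2 * \sum_(0 <= s < e.+1 | odd s == ~~ par) ncomp m.+2 s.+1 +
    \sum_(0 <= s < e.+1 | odd s == ~~ par) ncomp m.+2 s.
  by rewrite -!big_split big_distrr -big_split; apply: eq_bigr => s _; exact: ncomp_rec.
lia.
Qed.

Lemma cardL_diag_rec par m :
  cardL par m.+3 m.+3 + cardL (~~ par) m.+1 m.+1 =
  2 * cardL par m.+2 m.+2 + cardL (~~ par) m.+2 m.+2.
Proof.
have := cardL_rec par m m.+2.
by rewrite (@cardL_saturate _ m.+1 m.+2 m.+1) ?(@cardL_saturate _ m.+2 m.+3 m.+2) //; lia.
Qed.

Lemma Lo_Le_diag_fib k : 0 < k ->
  2 * Lo k k + fib k = fib (2 * k) /\ 2 * Le k k = fib (2 * k) + fib k.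
Proof.
(* k = 1 and k = 2 are closed by computation *)
elim/ltn_ind: k => -[|[|[|m]]] IH // _.
have [IH1 IH2] := IH m.+1 (ltnW (ltnSn _)) isT.
have [IH3 IH4] := IH m.+2 (ltnSn _) isT.
have rec_o := cardL_diag_rec true m; have rec_e := cardL_diag_rec false m.
rewrite /= in rec_o rec_e; rewrite /Lo /Le in IH1 IH2 IH3 IH4 *.
have -> : 2 * m.+3 = (2 * m.+1).+4 by lia.
rewrite (_ : 2 * m.+2 = (2 * m.+1).+2) in IH3 IH4; last lia.
have fibSS j : fib j.+2 = fib j.+1 + fib j by [].
have := fibSS (2 * m.+1).+2; have := fibSS (2 * m.+1).+1; have := fibSS (2 * m.+1).
have := fibSS m.+1; have := fibSS m.
split; lia.
Qed.

Theorem theorem7 :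
  (forall d, [/\ Lo 0 d = 0, Lo 1 d = 0, Le 0 d = 1 & Le 1 d = 1]) /\
  (Lo 2 0 = 0 /\ (forall d, 1 <= d -> Lo 2 d = 1) /\ (forall d, Le 2 d = 2)) /\
  ((forall k, Lo k 0 = 0) /\ Le 0 0 = 1 /\ (forall k, 1 <= k -> Le k 0 = 2 ^ (k - 1))) /\
  (forall k d, 3 <= k -> 1 <= d ->
     ((Lo k d)%:Z = (2 * Lo k.-1 d)%:Z + (Le k.-1 d.-1)%:Z - (Le k.-2 d.-1)%:Z)%R /\
     ((Le k d)%:Z = (2 * Le k.-1 d)%:Z + (Lo k.-1 d.-1)%:Z - (Lo k.-2 d.-1)%:Z)%R) /\
  (Lo 0 0 = 0 /\ Le 0 0 = 1 /\
   (forall k, 1 <= k ->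
      Lo k k = (fib (2 * k) - fib k) %/ 2 /\ Le k k = (fib (2 * k) + fib k) %/ 2)).
Proof.
have L0 par d : cardL par 0 d = ~~ par by case: par.
have L1 par d : cardL par 1 d = ~~ par.
  by rewrite (@cardL_saturate par 1 d 0) //; case: par.
have Lo_d0 k : Lo k 0 = 0 by rewrite /Lo cardL_ncomp big_mkcond big_nat1.
have Le_d0 k : 0 < k -> Le k 0 = 2 ^ (k - 1).
  by case: k => // k _; rewrite /Le cardL_ncomp big_mkcond big_nat1 /= ncomp_weight0 subn1.
split; first by move=> d; rewrite /Lo /Le !L0 !L1.
split.
  split; first exact: Lo_d0.
  split; first by case=> // d _; rewrite /Lo (@cardL_saturate _ 2 d.+1 1).
  by case=> [|d]; [rewrite Le_d0 | rewrite /Le (@cardL_saturate _ 2 d.+1 1)].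
split; first by split; [exact: Lo_d0 | split; [exact: L0 | exact: Le_d0]].
split.
  move=> [|[|[|m]]] [|e] // _ _; have := cardL_rec true m e; have := cardL_rec false m e.
  by rewrite /Lo /Le /=; split; lia.
do 2 split; first exact: L0.
move=> k /Lo_Le_diag_fib[fib_o fib_e].
by split; [rewrite -fib_o addnK | rewrite -fib_e]; rewrite mulKn.
Qed.
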